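(* Let $A$ be a Leibniz algebra over $k$ with $\mathrm{Ann}(A)=0$ or $[A,A]=A$. Then the action of $\mathrm{Bider}(A)$ on $A$ is an action of Leibniz algebras, the homomorphism $A\to\mathrm{Bider}(A)$, $a\mapsto([-,a],[a,-])$, is an actor of $A$, and $\mathfrak{B}(A)\cong\mathrm{Bider}(A)=\mathrm{Actor}(A)$.
   Context: $k$ is a commutative ring with unit. A Leibniz algebra is a $k$-module with a bilinear bracket satisfying $[x,[y,z]]=[[x,y],z]-[[x,z],y]$. $\mathrm{Ann}(A)=\{a\in A:[a,x]=[x,a]=0\ \forall x\in A\}$ and $[A,A]$ is the $k$-submodule spanned by all brackets. An action of a Leibniz algebra $B$ on $A$ is a pair of bilinear maps $B\times A\to A$, $(b,a)\mapsto[b,a]$, and $A\times B\to A$, $(a,b)\mapsto[a,b]$, such that for all $a,a_1,a_2\in A$, $b,b_1,b_2\in B$: $[a_1,[a_2,b]]=[[a_1,a_2],b]-[[a_1,b],a_2]$; $[a_1,[b,a_2]]=[[a_1,b],a_2]-[[a_1,a_2],b]$; $[b,[a_1,a_2]]=[[b,a_1],a_2]-[[b,a_2],a_1]$; $[a,[b_1,b_2]]=[[a,b_1],b_2]-[[a,b_2],b_1]$; $[b_1,[a,b_2]]=[[b_1,a],b_2]-[[b_1,b_2],a]$; $[b_1,[b_2,a]]=[[b_1,b_2],a]-[[b_1,a],b_2]$. A crossed module of Leibniz algebras is a homomorphism $\partial:A\to G$ with an action of $G$ on $A$ such that $\partial[g,a]=[g,\partial a]$, $\partial[a,g]=[\partial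 a,g]$, $[\partial a,a']=[a,a']$, $[a',\partial a]=[a',a]$. An actor of $A$ is a crossed module $\partial:A\to\mathrm{Actor}(A)$ such that for every Leibniz algebra $C$ with an action on $A$ there is a unique homomorphism $\varphi:C\to\mathrm{Actor}(A)$ with $[\varphi(c),a]=[c,a]$, $[a,\varphi(c)]=[a,c]$ for all $c\in C$, $a\in A$. Biderivations: $\mathrm{Bider}(A)$ is the set of pairs $\varphi=([-,\varphi],[\varphi,-])$ of $k$-linear maps $A\to A$ with $[[a_1,a_2],\varphi]=[a_1,[a_2,\varphi]]+[[a_1,\varphi],a_2]$, $[\varphi,[a_1,a_2]]=[[\varphi,a_1],a_2]-[[\varphi,a_2],a_1]$, $[a_1,[a_2,\varphi]]=-[a_1,[\varphi,a_2]]$. It is a $k$-module componentwise, with bracket $[\varphi,\varphi']$ given by $[a,[\varphi,\varphi']]=[[a,\varphi],\varphi']-[[a,\varphi'],\varphi]$ and $[[\varphi,\varphi'],a]=[\varphi,[\varphi',a]]+[[\varphi,a],\varphi']$, and acts on $A$ by $(\varphi,a)\mapsto[\varphi,a]$, $(a,\varphi)\mapsto[a,\varphi]$. Construction of $\mathfrak{B}(A)$: let $(B_j)_{j\in J}$ range over all Leibniz algebras with an action on $A$ (one index per action). For $b\in B_j$ let $\mathbf b$ be the pair of $k$-linear maps $a\mapsto[a,b]$, $a\mapsto[b,a]$. On pairs $x=([-,x],[x,-])$ of $k$-linear maps define addition and scalar multiplication componentwise and the bracket by $[a,[x,y]]=[[a,x],y]-[[a,y],x]$, $[[x,y],a]=[x,[y,a]]+[[x,a],y]$.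 $\mathfrak{B}(A)$ is the set of pairs obtained from all the $\mathbf b$ by iterating these operations. *)

From HB Require Import structures.
From mathcomp Require Import all_boot all_order all_algebra.
Set Implicit Arguments. Unset Strict Implicit. Unset Printing Implicit Defensive.
Import GRing.Theory.
Local Open Scope ring_scope.

Section Leibniz.
Variable k : comPzRingType.

Definition klinear (M N : lmodType k) (f : M -> N) : Prop :=
  forall (c : k) (x y : M), f (c *: x + y) = c *: f x + f y.

Definition kbilinear (M N O : lmodType k) (f : M -> N -> O) : Prop :=
  (forall x, klinear (f x)) /\ (forall y, klinear (fun x => f x y)).

Definition leibniz_on (M : Type) (S : M -> Prop) (addM : M -> M -> M)
    (oppM : M -> M) (br : M -> M -> M) : Prop :=
  forall x y z, S x -> S y -> S z ->
    br x (br y z) = addM (br (br x y) z) (oppM (br (br x z) y)).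

Definition is_leibniz (M : lmodType k) (br : M -> M -> M) : Prop :=
  kbilinear br /\ leibniz_on (fun _ => True) +%R -%R br.

Definition action_identities (B A : Type) (S : B -> Prop)
    (addA : A -> A -> A) (oppA : A -> A)
    (brB : B -> B -> B) (brA : A -> A -> A)
    (l : B -> A -> A) (r : A -> B -> A) : Prop :=
  (forall a1 a2 b, S b ->
     brA a1 (r a2 b) = addA (r (brA a1 a2) b) (oppA (brA (r a1 b) a2))) /\
  (forall a1 a2 b, S b ->
     brA a1 (l b a2) = addA (brA (r a1 b) a2) (oppA (r (brA a1 a2) b))) /\
  (forall a1 a2 b, S b ->
     l b (brA a1 a2) = addA (brA (l b a1) a2) (oppA (brA (l b a2) a1))) /\
  (forall a b1 b2, S b1 -> S b2 ->
     r a (brB b1 b2) = addA (r (r a b1) b2) (oppA (r (r a b2) b1))) /\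
  (forall a b1 b2, S b1 -> S b2 ->
     l b1 (r a b2) = addA (r (l b1 a) b2) (oppA (l (brB b1 b2) a))) /\
  (forall a b1 b2, S b1 -> S b2 ->
     l b1 (l b2 a) = addA (l (brB b1 b2) a) (oppA (r (l b1 a) b2))).

Definition leibniz_action (B A : lmodType k) (brB : B -> B -> B)
    (brA : A -> A -> A) (l : B -> A -> A) (r : A -> B -> A) : Prop :=
  kbilinear l /\ kbilinear r /\
  action_identities (fun _ => True) +%R -%R brB brA l r.

Variables (A : lmodType k) (br : A -> A -> A).

Definition ann_trivial : Prop :=
  forall a : A, (forall x, br a x = 0 /\ br x a = 0) -> a = 0.

Definition perfect : Prop :=
  forall a : A, exists (n : nat) (c : 'I_n -> k) (x y : 'I_n -> A),
    a = \sum_(i < n) c i *: br (x i) (y i).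

(* Pairs x = ([-,x],[x,-]) of maps A -> A: x.1 a = [a,x], x.2 a = [x,a]. *)
Definition pairA : Type := ((A -> A) * (A -> A))%type.

Definition pzero : pairA := (fun _ => 0, fun _ => 0).
Definition padd (x y : pairA) : pairA :=
  (fun a => x.1 a + y.1 a, fun a => x.2 a + y.2 a).
Definition popp (x : pairA) : pairA := (fun a => - x.1 a, fun a => - x.2 a).
Definition pscale (c : k) (x : pairA) : pairA :=
  (fun a => c *: x.1 a, fun a => c *: x.2 a).
(* [a,[x,y]] = [[a,x],y] - [[a,y],x] ;  [[x,y],a] = [x,[y,a]] + [[x,a],y] *)
Definition pbr (x y : pairA) : pairA :=
  (fun a => y.1 (x.1 a) - x.1 (y.1 a), fun a => x.2 (y.2 a) + y.1 (x.2 a)).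

Definition pl (x : pairA) (a : A) : A := x.2 a.
Definition pr (a : A) (x : pairA) : A := x.1 a.

Definition bider (x : pairA) : Prop :=
  klinear x.1 /\ klinear x.2 /\
  (forall a1 a2, x.1 (br a1 a2) = br a1 (x.1 a2) + br (x.1 a1) a2) /\
  (forall a1 a2, x.2 (br a1 a2) = br (x.2 a1) a2 - br (x.2 a2) a1) /\
  (forall a1 a2, br a1 (x.1 a2) = - br a1 (x.2 a2)).

(* Bider(A) is a Leibniz algebra (k-submodule of pairs, closed under the
   bracket, bracket bilinear and satisfying the Leibniz identity on it)
   and its action on A is an action of Leibniz algebras. *)
Definition bider_leibniz_action : Prop :=
  bider pzero /\
  (forall x y, bider x -> bider y -> bider (padd x y)) /\
  (forall c x, bider x -> bider (pscale c x)) /\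
  (forall x y, bider x -> bider y -> bider (pbr x y)) /\
  (forall c x y z, bider x -> bider y -> bider z ->
     pbr (padd (pscale c x) y) z = padd (pscale c (pbr x z)) (pbr y z) /\
     pbr z (padd (pscale c x) y) = padd (pscale c (pbr z x)) (pbr z y)) /\
  leibniz_on bider padd popp pbr /\
  (forall c x y a, bider x -> bider y ->
     pl (padd (pscale c x) y) a = c *: pl x a + pl y a /\
     pr a (padd (pscale c x) y) = c *: pr a x + pr a y) /\
  (forall x, bider x -> klinear (pl x) /\ klinear (fun a => pr a x)) /\
  action_identities bider +%R -%R pbr br pl pr.

Definition inner (a : A) : pairA := (fun x => br x a, fun x => br a x).

Definition phom (M : lmodType k) (brM : M -> M -> M) (f : M -> pairA) : Prop :=
  (forall c x y, f (c *: x + y) = padd (pscale c (f x)) (f y)) /\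
  (forall x y, f (brM x y) = pbr (f x) (f y)).

Definition inner_crossed_module : Prop :=
  (forall a, bider (inner a)) /\
  phom br inner /\
  (forall g a, bider g -> inner (pl g a) = pbr g (inner a)) /\
  (forall g a, bider g -> inner (pr a g) = pbr (inner a) g) /\
  (forall a a', pl (inner a) a' = br a a') /\
  (forall a a', pr a' (inner a) = br a' a).

Definition actor_universal : Prop :=
  forall (C : lmodType k) (brC : C -> C -> C) (l : C -> A -> A) (r : A -> C -> A),
    is_leibniz brC -> leibniz_action brC br l r ->
    exists phi : C -> pairA,
      ((forall c, bider (phi c)) /\ phom brC phi /\
       (forall c a, pl (phi c) a = l c a /\ pr a (phi c) = r a c)) /\
      (forall psi : C -> pairA,
        (forall c, bider (psi c)) -> phom brC psi ->
        (forall c a, pl (psi c) a = l c a /\ pr a (psi c) = r a c) ->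
        forall c, psi c = phi c).

Inductive frakB : pairA -> Prop :=
  | frakB_gen (B : lmodType k) (brB : B -> B -> B) (l : B -> A -> A)
      (r : A -> B -> A) (b : B) :
      is_leibniz brB -> leibniz_action brB br l r ->
      frakB (fun a => r a b, fun a => l b a)
  | frakB_add x y : frakB x -> frakB y -> frakB (padd x y)
  | frakB_scale c x : frakB x -> frakB (pscale c x)
  | frakB_br x y : frakB x -> frakB y -> frakB (pbr x y).

End Leibniz.

From HB Require Import structures.
From mathcomp Require Import all_boot all_order all_algebra boolp.
Set Implicit Arguments. Unset Strict Implicit. Unset Printing Implicit Defensive.
Import GRing.Theory.
Local Open Scope ring_scope.

(* Most of the statement is direct computation with the biderivation axioms.
   The exceptions, the Leibniz identity in Bider(A) and the fifth action
   identity, both reduce to [x, [a, y] + [y, a]] = 0 for biderivations x, y.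
   Since s = [a, y] + [y, a] satisfies [A, s] = 0, the biderivation axioms
   force [x, s] into Ann(A), so it vanishes when Ann(A) = 0; when [A, A] = A
   it suffices to check it on brackets a = [p, q], where it is a computation.
   Bider(A) is then a Leibniz algebra acting on A, so every biderivation is a
   generator of the construction B(A); conversely every generator is a
   biderivation, and biderivations are closed under the operations. *)

(* Proves an identity between signed sums in an abelian group by moving
   everything to the left and cancelling opposite summands pairwise. *)
Ltac pull_left a :=
  do 30 try (first [rewrite [in LHS](addrCA _ a _) | rewrite [in LHS](addrC _ a)]).
Ltac cancel_head :=
  rewrite ?add0r ?addr0 ?oppr0;
  match goal with
  | |- 0 = 0 => reflexivity
  | |- - ?a + _ = 0 => pull_left a; first [rewrite addNKr | rewrite addrN]
  | |- ?a + _ = 0 => pull_left (- a); first [rewrite addKr | rewrite addNr]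
  end.
Ltac zmod_cancel :=
  apply/eqP; rewrite -subr_eq0; apply/eqP;
  rewrite ?opprD ?opprK -?addrA; repeat cancel_head.

Section KLinear.
Variable k : comPzRingType.
Implicit Types M N O : lmodType k.

Lemma klinearD M N (f : M -> N) : klinear f -> {morph f : x y / x + y}.
Proof. by move=> lf x y; have := lf 1 x y; rewrite !scale1r. Qed.

Lemma klinear0 M N (f : M -> N) : klinear f -> f 0 = 0.
Proof. by move=> lf; apply: (addrI (f 0)); rewrite -klinearD // !addr0. Qed.

Lemma klinearZ M N (f : M -> N) c x : klinear f -> f (c *: x) = c *: f x.
Proof. by move=> lf; rewrite -[c *: x]addr0 lf klinear0 // addr0. Qed.

Lemma klinearN M N (f : M -> N) : klinear f -> {morph f : x / - x}.
Proof. by move=> lf x; rewrite -scaleN1r klinearZ // scaleN1r. Qed.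

Lemma klinearB M N (f : M -> N) : klinear f -> {morph f : x y / x - y}.
Proof. by move=> lf x y; rewrite klinearD // klinearN. Qed.

Lemma klinear_comp M N O (f : M -> N) (g : N -> O) :
  klinear f -> klinear g -> klinear (fun x => g (f x)).
Proof. by move=> lf lg c x y; rewrite lf lg. Qed.

Lemma klinear_add M N (f g : M -> N) :
  klinear f -> klinear g -> klinear (fun x => f x + g x).
Proof. by move=> lf lg c x y; rewrite lf lg scalerDr addrACA. Qed.

Lemma klinear_opp M N (f : M -> N) : klinear f -> klinear (fun x => - f x).
Proof. by move=> lf c x y; rewrite lf opprD scalerN. Qed.

Lemma klinear_scale M N (f : M -> N) d :
  klinear f -> klinear (fun x => d *: f x).
Proof. by move=> lf c x y; rewrite lf scalerDr !scalerA mulrC. Qed.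

End KLinear.

Lemma pair_ext (k : comPzRingType) (A : lmodType k) (x y : pairA A) :
  x.1 =1 y.1 -> x.2 =1 y.2 -> x = y.
Proof. by case: x y => [x1 x2] [y1 y2] /= /funext-> /funext->. Qed.

Section LeibnizAlgebra.
Variables (k : comPzRingType) (A : lmodType k) (br : A -> A -> A).
Hypothesis leibA : is_leibniz br.

Lemma br_linr x : klinear (br x). Proof. by case: leibA => [[]]. Qed.
Lemma br_linl y : klinear (br^~ y). Proof. by case: leibA => [[]]. Qed.

Lemma brDr x : {morph br x : u v / u + v}. Proof. exact/klinearD/br_linr. Qed.
Lemma brDl y u v : br (u + v) y = br u y + br v y.
Proof. exact: (klinearD (br_linl y)). Qed.
Lemma brBr x : {morph br x : u v / u - v}. Proof. exact/klinearB/br_linr. Qed.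
Lemma brBl y u v : br (u - v) y = br u y - br v y.
Proof. exact: (klinearB (br_linl y)). Qed.
Lemma br0r x : br x 0 = 0. Proof. exact/klinear0/br_linr. Qed.
Lemma br0l y : br 0 y = 0. Proof. exact: (klinear0 (br_linl y)). Qed.
Lemma brZr x c u : br x (c *: u) = c *: br x u. Proof. exact/klinearZ/br_linr. Qed.
Lemma brZl y c u : br (c *: u) y = c *: br u y.
Proof. exact: (klinearZ _ _ (br_linl y)). Qed.

Lemma leibniz x y z : br x (br y z) = br (br x y) z - br (br x z) y.
Proof. by case: leibA => _; apply. Qed.

Lemma leibniz_antisym x y z : br x (br y z) = - br x (br z y).
Proof. by rewrite leibniz (leibniz x z y) opprB. Qed.

Definition rann (r : A) := forall b, br b r = 0.
Definition in_ann (a : A) := forall b, br a b = 0 /\ br b a = 0.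

Lemma perfect_klinear_eq0 (N : lmodType k) (G : A -> N) :
  perfect br -> klinear G -> (forall p q, G (br p q) = 0) -> forall a, G a = 0.
Proof.
move=> perfA linG Gbr0 a; have [n [c [u [v ->]]]] := perfA a.
elim/big_ind: _ => [|s t Gs Gt|i _]; first exact: klinear0.
- by rewrite (klinearD linG) Gs Gt addr0.
- by rewrite (klinearZ _ _ linG) Gbr0 scaler0.
Qed.

Section Biderivation.
Variable x : pairA A.
Hypothesis hx : bider br x.

Lemma bider_lin1 : klinear x.1. Proof. by case: hx. Qed.
Lemma bider_lin2 : klinear x.2. Proof. by case: hx => _ []. Qed.
Lemma bider_der1 a1 a2 : x.1 (br a1 a2) = br a1 (x.1 a2) + br (x.1 a1) a2.
Proof. by case: hx => _ [_ []]. Qed.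
Lemma bider_der2 a1 a2 : x.2 (br a1 a2) = br (x.2 a1) a2 - br (x.2 a2) a1.
Proof. by case: hx => _ [_ [_ []]]. Qed.
Lemma bider_swap a1 a2 : br a1 (x.1 a2) = - br a1 (x.2 a2).
Proof. by case: hx => _ [_ [_ []]]. Qed.

Lemma bider_rann_sym a : rann (x.1 a + x.2 a).
Proof. by move=> b; rewrite brDr bider_swap addNr. Qed.

Lemma bider1_rann r : rann r -> rann (x.1 r).
Proof.
by move=> rr b; have := bider_der1 b r; rewrite rr (klinear0 bider_lin1) rr addr0.
Qed.

Lemma bider2_rann r : rann r -> in_ann (x.2 r).
Proof.
move=> rr b; split.
  have := bider_der2 b r; rewrite rr (klinear0 bider_lin2) rr sub0r.
  by move/eqP; rewrite eq_sym oppr_eq0 => /eqP.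
have := bider_der1 b r; rewrite rr (klinear0 bider_lin1) rr addr0 => e.
by rewrite -[br b _]opprK -bider_swap -e oppr0.
Qed.

Lemma bider2_sym_bracket p u : x.2 (br p u + br u p) = 0.
Proof. by rewrite (klinearD bider_lin2) !bider_der2; zmod_cancel. Qed.

Lemma bider_sym_bracket p q :
  x.1 (br p q) + x.2 (br p q) =
  br (x.1 p + x.2 p) q - (br p (x.2 q) + br (x.2 q) p).
Proof. by rewrite bider_der1 bider_der2 bider_swap brDl; zmod_cancel. Qed.

End Biderivation.

Lemma bider2_sym_eq0 x y : ann_trivial br \/ perfect br ->
  bider br x -> bider br y -> forall a, x.2 (y.1 a + y.2 a) = 0.
Proof.
move=> [annA|perfA] hx hy a.
  exact/annA/(bider2_rann hx)/(bider_rann_sym hy).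
apply: (perfect_klinear_eq0 (G := fun a => x.2 (y.1 a + y.2 a)) perfA) => [|p q].
  exact: klinear_comp (klinear_add (bider_lin1 hy) (bider_lin2 hy)) (bider_lin2 hx).
have s_rann := bider_rann_sym hy p.
rewrite bider_sym_bracket // (klinearB (bider_lin2 hx)) bider2_sym_bracket //.
by rewrite bider_der2 // (bider2_rann hx s_rann q).1 s_rann !subr0.
Qed.

Lemma bider0 : bider br (pzero A).
Proof.
split; first by move=> c x y; rewrite scaler0 addr0.
split; first by move=> c x y; rewrite scaler0 addr0.
split; first by move=> a1 a2; rewrite br0r br0l addr0.
split; first by move=> a1 a2; rewrite !br0l subr0.
by move=> a1 a2; rewrite br0r oppr0.
Qed.

Lemma biderD x y : bider br x -> bider br y -> bider br (padd x y).
Proof.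
move=> hx hy.
split; first exact: klinear_add (bider_lin1 hx) (bider_lin1 hy).
split; first exact: klinear_add (bider_lin2 hx) (bider_lin2 hy).
split; first by move=> a1 a2 /=; rewrite !bider_der1 // brDr brDl; zmod_cancel.
split; first by move=> a1 a2 /=; rewrite !bider_der2 // !brDl; zmod_cancel.
by move=> a1 a2 /=; rewrite !brDr !bider_swap // opprD.
Qed.

Lemma biderZ c x : bider br x -> bider br (pscale c x).
Proof.
move=> hx.
split; first exact: klinear_scale (bider_lin1 hx).
split; first exact: klinear_scale (bider_lin2 hx).
split; first by move=> a1 a2 /=; rewrite bider_der1 // brZr brZl scalerDr.
split; first by move=> a1 a2 /=; rewrite bider_der2 // !brZl scalerBr.
by move=> a1 a2 /=; rewrite !brZr bider_swap // scalerN.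
Qed.

Lemma bider_pbr_swap x y : bider br x -> bider br y ->
  forall a1 a2, br a1 ((pbr x y).1 a2) = - br a1 ((pbr x y).2 a2).
Proof.
move=> hx hy a1 a2 /=.
have e1 : br a1 (y.1 (x.1 a2)) = - br a1 (y.1 (x.2 a2)).
  apply/eqP; rewrite -addr_eq0 -brDr -(klinearD (bider_lin1 hy)).
  exact/eqP/(bider1_rann hy)/(bider_rann_sym hx).
have e2 : br a1 (x.2 (y.1 a2)) = - br a1 (x.2 (y.2 a2)).
  apply/eqP; rewrite -addr_eq0 -brDr -(klinearD (bider_lin2 hx)).
  rewrite -oppr_eq0 -bider_swap //.
  exact/eqP/(bider1_rann hx)/(bider_rann_sym hy).
by rewrite brBr !brDr e1 (bider_swap hx) e2; zmod_cancel.
Qed.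

Lemma bider_pbr x y : bider br x -> bider br y -> bider br (pbr x y).
Proof.
move=> hx hy.
split.
  apply: klinear_add; first exact: klinear_comp (bider_lin1 hx) (bider_lin1 hy).
  exact/klinear_opp/(klinear_comp (bider_lin1 hy) (bider_lin1 hx)).
split.
  apply: klinear_add; first exact: klinear_comp (bider_lin2 hy) (bider_lin2 hx).
  exact: klinear_comp (bider_lin2 hx) (bider_lin1 hy).
split.
  move=> a1 a2 /=.
  rewrite !bider_der1 // (klinearD (bider_lin1 hx)) (klinearD (bider_lin1 hy)).
  by rewrite !bider_der1 // brBr brBl; zmod_cancel.
split; last exact: bider_pbr_swap.
move=> a1 a2 /=.
rewrite bider_der2 // (klinearB (bider_lin2 hx)) !bider_der2 //.
by rewrite (klinearB (bider_lin1 hy)) !bider_der1 // !brDl !bider_swap //; zmod_cancel.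
Qed.

Lemma pbr_linl c x y z : bider br z ->
  pbr (padd (pscale c x) y) z = padd (pscale c (pbr x z)) (pbr y z).
Proof.
move=> hz; apply: pair_ext => a /=.
  by rewrite (bider_lin1 hz) !scalerBr; zmod_cancel.
by rewrite (bider_lin1 hz) !scalerDr; zmod_cancel.
Qed.

Lemma pbr_linr c x y z : bider br z ->
  pbr z (padd (pscale c x) y) = padd (pscale c (pbr z x)) (pbr z y).
Proof.
move=> hz; apply: pair_ext => a /=.
  by rewrite (bider_lin1 hz) !scalerBr; zmod_cancel.
by rewrite (bider_lin2 hz) !scalerDr; zmod_cancel.
Qed.

Section AnnTrivialOrPerfect.
Hypothesis annA_or_perfA : ann_trivial br \/ perfect br.

Lemma bider2_swap x y a : bider br x -> bider br y ->
  x.2 (y.1 a) = - x.2 (y.2 a).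
Proof.
move=> hx hy; apply/eqP; rewrite -addr_eq0 -(klinearD (bider_lin2 hx)).
exact/eqP/bider2_sym_eq0.
Qed.

Lemma pbr_leibniz : leibniz_on (bider br) (@padd _ A) (@popp _ A) (@pbr _ A).
Proof.
move=> x y z hx hy hz; apply: pair_ext => a /=.
  rewrite !(klinearB (bider_lin1 hx)) !(klinearB (bider_lin1 hy)).
  by rewrite !(klinearB (bider_lin1 hz)); zmod_cancel.
rewrite !(klinearD (bider_lin2 hx)) !(klinearD (bider_lin1 hz)).
rewrite !(klinearD (bider_lin1 hy)).
by rewrite (bider2_swap _ hx hz); zmod_cancel.
Qed.

Lemma bider_action_identities :
  action_identities (bider br) +%R -%R (@pbr _ A) br (@pl _ A) (@pr _ A).
Proof.
rewrite /pl /pr.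
split; first by move=> a1 a2 b hb; rewrite bider_der1 // addrK.
split; first by move=> a1 a2 b hb; rewrite bider_der1 // bider_swap //; zmod_cancel.
split; first by move=> a1 a2 b hb; rewrite bider_der2.
split; first by [].
split; last by move=> a b1 b2 _ _ /=; rewrite addrK.
by move=> a b1 b2 hb1 hb2 /=; rewrite (bider2_swap _ hb1 hb2); zmod_cancel.
Qed.

Lemma bider_is_leibniz_action : bider_leibniz_action br.
Proof.
split; first exact: bider0.
split; first exact: biderD.
split; first exact: biderZ.
split; first exact: bider_pbr.
split; first by move=> c x y z _ _ hz; split; [exact: pbr_linl | exact: pbr_linr].
split; first exact: pbr_leibniz.
split; first by [].
split; first by move=> x hx; split; [exact: bider_lin2 | exact: bider_lin1].
exact: bider_action_identities.
Qed.

End AnnTrivialOrPerfect.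

Lemma bider_inner a : bider br (inner br a).
Proof.
split; first exact: br_linl.
split; first exact: br_linr.
split; first by move=> a1 a2 /=; rewrite leibniz subrK.
split; first by move=> a1 a2 /=; rewrite leibniz.
by move=> a1 a2 /=; rewrite leibniz_antisym.
Qed.

Lemma inner_is_crossed_module : inner_crossed_module br.
Proof.
split; first exact: bider_inner.
split.
  split=> [c x y|x y]; apply: pair_ext => a /=.
  - exact: br_linr.
  - exact: (br_linl a c x y).
  - exact: leibniz.
  - by rewrite leibniz; zmod_cancel.
split.
  move=> g a hg; apply: pair_ext => b /=; rewrite /pl.
    by rewrite bider_der1 // bider_swap //; zmod_cancel.
  by rewrite bider_der2 //; zmod_cancel.
split; last by [].
move=> g a hg; apply: pair_ext => b /=; rewrite /pr.
  by rewrite bider_der1 //; zmod_cancel.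
by rewrite bider_der1 // bider_swap //; zmod_cancel.
Qed.

Lemma action_bider (B : lmodType k) (brB : B -> B -> B) l r (b : B) :
  leibniz_action brB br l r -> bider br (fun a => r a b, fun a => l b a).
Proof.
move=> [[linl _] [[_ linr] [act1 [act2 [act3 _]]]]].
split; first exact: linr.
split; first exact: linl.
split; first by move=> a1 a2 /=; rewrite act1 //; zmod_cancel.
split; first by move=> a1 a2 /=; rewrite act3.
by move=> a1 a2 /=; rewrite act1 // act2 //; zmod_cancel.
Qed.

Lemma bider_actor_universal : actor_universal br.
Proof.
move=> C brC l r _ actC.
exists (fun c => (fun a => r a c, fun a => l c a)); split.
  have [[_ linl] [[linr _] [_ [_ [_ [act4 [_ act6]]]]]]] := actC.
  split; first by move=> c; exact: action_bider actC.
  split; last by [].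
  split=> [c x y|x y]; apply: pair_ext => a /=.
  - exact: linr.
  - exact: (linl a c x y).
  - exact: act4.
  - by rewrite act6 //; zmod_cancel.
move=> psi _ _ psi_act c; apply: pair_ext => a /=.
  by have [_ <-] := psi_act c a.
by have [<- _] := psi_act c a.
Qed.

End LeibnizAlgebra.

Record biderivation (k : comPzRingType) (A : lmodType k) (br : A -> A -> A) :=
  Biderivation { bval : pairA A; bvalP : bider br bval }.

Section BiderivationAlgebra.
Variables (k : comPzRingType) (A : lmodType k) (br : A -> A -> A).
Hypothesis leibA : is_leibniz br.

Local Notation Bider := (biderivation br).

HB.instance Definition _ := gen_eqMixin Bider.
HB.instance Definition _ := gen_choiceMixin Bider.

Lemma bval_inj : injective (@bval _ _ br).
Proof.
by case=> [x hx] [y hy] /= exy; subst y; rewrite (Prop_irrelevance hx hy).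
Qed.

Definition bider_zero : Bider := Biderivation (bider0 leibA).
Definition bider_add (x y : Bider) : Bider :=
  Biderivation (biderD leibA (bvalP x) (bvalP y)).
Definition bider_scale (c : k) (x : Bider) : Bider :=
  Biderivation (biderZ leibA c (bvalP x)).
Definition bider_opp (x : Bider) : Bider := bider_scale (-1) x.
Definition bider_br (x y : Bider) : Bider :=
  Biderivation (bider_pbr leibA (bvalP x) (bvalP y)).

Lemma bider_addA : associative bider_add.
Proof. by move=> x y z; apply: bval_inj; apply: pair_ext => a /=; rewrite addrA. Qed.
Lemma bider_addC : commutative bider_add.
Proof. by move=> x y; apply: bval_inj; apply: pair_ext => a /=; rewrite addrC. Qed.
Lemma bider_add0 : left_id bider_zero bider_add.
Proof. by move=> x; apply: bval_inj; apply: pair_ext => a /=; rewrite add0r. Qed.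
Lemma bider_addN : left_inverse bider_zero bider_opp bider_add.
Proof.
by move=> x; apply: bval_inj; apply: pair_ext => a /=; rewrite scaleN1r addNr.
Qed.

HB.instance Definition _ :=
  GRing.isZmodule.Build Bider bider_addA bider_addC bider_add0 bider_addN.

Lemma bider_scaleA c d (x : Bider) :
  bider_scale c (bider_scale d x) = bider_scale (c * d) x.
Proof. by apply: bval_inj; apply: pair_ext => a /=; rewrite scalerA. Qed.
Lemma bider_scale1 : left_id 1 bider_scale.
Proof. by move=> x; apply: bval_inj; apply: pair_ext => a /=; rewrite scale1r. Qed.
Lemma bider_scaleDr : right_distributive bider_scale +%R.
Proof. by move=> c x y; apply: bval_inj; apply: pair_ext => a /=; rewrite scalerDr. Qed.
Lemma bider_scaleDl (x : Bider) : {morph bider_scale^~ x : c d / c + d}.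
Proof. by move=> c d; apply: bval_inj; apply: pair_ext => a /=; rewrite scalerDl. Qed.

HB.instance Definition _ := GRing.Zmodule_isLmodule.Build k Bider
  bider_scaleA bider_scale1 bider_scaleDr bider_scaleDl.

Lemma bvalB (x y : Bider) : bval (x - y) = padd (bval x) (popp (bval y)).
Proof. by apply: pair_ext => a /=; rewrite scaleN1r. Qed.

Hypothesis annA_or_perfA : ann_trivial br \/ perfect br.

Lemma bider_br_leibniz : is_leibniz bider_br.
Proof.
split.
  split=> x c y z; apply: bval_inj.
  - exact: (pbr_linr c (bval y) (bval z) (bvalP x)).
  - exact: (pbr_linl c (bval y) (bval z) (bvalP x)).
move=> x y z _ _ _; apply: bval_inj.
rewrite bvalB.
exact: pbr_leibniz (bvalP x) (bvalP y) (bvalP z).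
Qed.

Lemma bider_br_action :
  leibniz_action bider_br br (fun x a => (bval x).2 a) (fun a x => (bval x).1 a).
Proof.
have [act1 [act2 [act3 [act4 [act5 act6]]]]] :=
  bider_action_identities leibA annA_or_perfA.
split; first by split=> [x|a c x y] //; exact: bider_lin2 (bvalP x).
split; first by split=> [a c x y|x] //; exact: bider_lin1 (bvalP x).
split; first by move=> a1 a2 x _; exact: act1 (bvalP x).
split; first by move=> a1 a2 x _; exact: act2 (bvalP x).
split; first by move=> a1 a2 x _; exact: act3 (bvalP x).
split; first by move=> a x y _ _; exact: act4 (bvalP x) (bvalP y).
split; first by move=> a x y _ _; exact: act5 (bvalP x) (bvalP y).
by move=> a x y _ _; exact: act6 (bvalP x) (bvalP y).
Qed.

Lemma bider_frakB x : bider br x -> frakB br x.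
Proof.
move=> hx; have := frakB_gen (Biderivation hx) bider_br_leibniz bider_br_action.
by case: x hx.
Qed.

End BiderivationAlgebra.

Lemma frakB_bider (k : comPzRingType) (A : lmodType k) (br : A -> A -> A) x :
  is_leibniz br -> frakB br x -> bider br x.
Proof.
move=> leibA; elim=> {x} [B brB l r b _ /action_bider // | y z _ hy _ hz | c y _ hy
  | y z _ hy _ hz].
- exact: biderD.
- exact: biderZ.
- exact: bider_pbr.
Qed.

Theorem proposition4p8 (k : comPzRingType) (A : lmodType k)
    (br : A -> A -> A) :
  is_leibniz br ->
  (ann_trivial br \/ perfect br) ->
  bider_leibniz_action br /\
  inner_crossed_module br /\
  actor_universal br /\
  (forall x : pairA A, frakB br x <-> bider br x).
Proof.
move=> leibA annA_or_perfA.
split; first exact: bider_is_leibniz_action.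
split; first exact: inner_is_crossed_module.
split; first exact: bider_actor_universal.
by move=> x; split; [exact: frakB_bider | exact: bider_frakB].
Qed.
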